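(* Let $\mathbf{B}\in\mathbb{R}^{n\times n}$ be a nonsingular matrix, $\mathcal L=\mathbf{B}\mathbb{Z}^n$, $s>0$, $\mathbf{c}\in\mathbb{R}^n$ and $\mathcal R>0$. Let $\mathcal X_{\mathcal R}:=\{\mathbf{x}\in\mathbb{Z}^n:\|\mathbf{B}\mathbf{x}-\mathbf{c}\|\le\mathcal R\}$, and assume $\mathcal X_{\mathcal R}\neq\emptyset$ (so that $Q(\mathcal X_{\mathcal R})>0$ and $\rho_{s,\mathbf c}(\mathbf B\mathcal X_{\mathcal R})>0$). Define the probability distributions on $\mathbb{Z}^n$ (both zero outside $\mathcal X_{\mathcal R}$) $$\pi_{\mathcal R}(\mathbf x)=\frac{\rho_{s,\mathbf c}(\mathbf B\mathbf x)}{\rho_{s,\mathbf c}(\mathbf B\mathcal X_{\mathcal R})},\qquad Q_{\mathcal R}(\mathbf x)=\frac{Q(\mathbf x)}{Q(\mathcal X_{\mathcal R})}\qquad(\mathbf x\in\mathcal X_{\mathcal R}),$$ where $Q(\mathcal X_{\mathcal R})=\sum_{\mathbf x\in\mathcal X_{\mathcal R}}Q(\mathbf x)$ and $\rho_{s,\mathbf c}(\mathbf B\mathcal X_{\mathcal R})=\sum_{\mathbf x\in\mathcal X_{\mathcal R}}\rho_{s,\mathbf c}(\mathbf B\mathbf x)$. Set $$\Delta_{\mathcal R}:=\frac{\rho_{s,\mathbf c}(\mathbf B\mathcal X_{\mathcal R})}{\prod_{i=1}^n\rho_{s_i}(\mathbb Z)},\qquad p_{\mathcal R}:=\frac{\Delta_{\mathcal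 R}}{Q(\mathcal X_{\mathcal R})}.$$ Then $p_{\mathcal R}\in(0,1]$ (equivalently $Q(\mathcal X_{\mathcal R})\ge\Delta_{\mathcal R}>0$), and for every $\mathbf x\in\mathbb Z^n$, $$Q_{\mathcal R}(\mathbf x)\ge p_{\mathcal R}\,\pi_{\mathcal R}(\mathbf x).$$
   Context: For $s>0$ and $c\in\mathbb{R}^k$, $\rho_{s,c}(y)=\exp(-\pi\|y-c\|^2/s^2)$ for $y\in\mathbb R^k$, $\rho_s:=\rho_{s,0}$, and for a countable set $S$, $\rho_{s,c}(S)=\sum_{y\in S}\rho_{s,c}(y)$. Let $\mathbf B=\mathbf Q\mathbf R$ be a QR decomposition ($\mathbf Q$ orthogonal, $\mathbf R=(r_{ij})$ upper triangular), $\mathbf c'=\mathbf Q^{\top}\mathbf c$. For $\mathbf x\in\mathbb Z^n$ and $i=1,\dots,n$, put $s_i:=s/|r_{ii}|$ and $\mu_i(\mathbf x_{>i}):=\big(c'_i-\sum_{j>i}r_{ij}x_j\big)/r_{ii}$. The Klein distribution on $\mathbb Z^n$ is $$Q(\mathbf x):=\prod_{i=1}^n\frac{\rho_{s_i,\mu_i(\mathbf x_{>i})}(x_i)}{\rho_{s_i,\mu_i(\mathbf x_{>i})}(\mathbb Z)}=\frac{\rho_{s,\mathbf c}(\mathbf B\mathbf x)}{\prod_{i=1}^n\rho_{s_i,\mu_i(\mathbf x_{>i})}(\mathbb Z)},$$ using the identity $\rho_{s,\mathbf c}(\mathbf B\mathbf x)=\prod_{i=1}^n\rho_{s_i,\mu_i(\mathbf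 x_{>i})}(x_i)$. *)

From HB Require Import structures.
From mathcomp Require Import all_boot all_order all_algebra.
From mathcomp Require Import all_classical all_reals.
From mathcomp Require Import ereal topology normedtype sequences esum exp trigo.
Set Implicit Arguments. Unset Strict Implicit. Unset Printing Implicit Defensive.
Import Order.TTheory GRing.Theory Num.Theory.
Local Open Scope classical_set_scope.
Local Open Scope ring_scope.

Section Klein.
Variables (R : realType).

Definition vnorm (n : nat) (v : 'cV[R]_n) : R := Num.sqrt (\sum_(i < n) v i 0 ^+ 2).

Definition rhov (n : nat) (s : R) (c y : 'cV[R]_n) : R :=
  expR (- pi * (vnorm (y - c)) ^+ 2 / s ^+ 2).

Definition rho1 (s c y : R) : R := expR (- pi * (y - c) ^+ 2 / s ^+ 2).

Definition rhoZ (s c : R) : R :=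
  fine (\esum_(k in [set: int]) (rho1 s c k%:~R)%:E).

Definition intv (n : nat) (x : 'cV[int]_n) : 'cV[R]_n := map_mx (fun z : int => z%:~R) x.

Definition s_i (n : nat) (s : R) (Rm : 'M[R]_n) (i : 'I_n) : R := s / `|Rm i i|.

Definition mu_i (n : nat) (Qm Rm : 'M[R]_n) (c : 'cV[R]_n) (x : 'cV[int]_n)
    (i : 'I_n) : R :=
  (((Qm^T *m c) i 0) - \sum_(j < n | (i < j)%N) Rm i j * (x j 0)%:~R) / Rm i i.

Definition kleinQ (n : nat) (s : R) (Qm Rm : 'M[R]_n) (c : 'cV[R]_n)
    (x : 'cV[int]_n) : R :=
  \prod_(i < n) (rho1 (s_i s Rm i) (mu_i Qm Rm c x i) (x i 0)%:~R
                 / rhoZ (s_i s Rm i) (mu_i Qm Rm c x i)).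

Definition ballX (n : nat) (B : 'M[R]_n) (c : 'cV[R]_n) (Rad : R) : set 'cV[int]_n :=
  [set x | vnorm (B *m intv x - c) <= Rad].

Definition QX (n : nat) (s : R) (B Qm Rm : 'M[R]_n) (c : 'cV[R]_n) (Rad : R) : R :=
  fine (\esum_(x in ballX B c Rad) (kleinQ s Qm Rm c x)%:E).

Definition rhoX (n : nat) (s : R) (B : 'M[R]_n) (c : 'cV[R]_n) (Rad : R) : R :=
  fine (\esum_(x in ballX B c Rad) (rhov s c (B *m intv x))%:E).

Definition piR (n : nat) (s : R) (B : 'M[R]_n) (c : 'cV[R]_n) (Rad : R)
    (x : 'cV[int]_n) : R :=
  if x \in ballX B c Rad then rhov s c (B *m intv x) / rhoX s B c Rad else 0.

Definition QR (n : nat) (s : R) (B Qm Rm : 'M[R]_n) (c : 'cV[R]_n) (Rad : R)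
    (x : 'cV[int]_n) : R :=
  if x \in ballX B c Rad then kleinQ s Qm Rm c x / QX s B Qm Rm c Rad else 0.

Definition DeltaR (n : nat) (s : R) (B Rm : 'M[R]_n) (c : 'cV[R]_n) (Rad : R) : R :=
  rhoX s B c Rad / \prod_(i < n) rhoZ (s_i s Rm i) 0.

Definition pR (n : nat) (s : R) (B Qm Rm : 'M[R]_n) (c : 'cV[R]_n) (Rad : R) : R :=
  DeltaR s B Rm c Rad / QX s B Qm Rm c Rad.

End Klein.

From HB Require Import structures.
From mathcomp Require Import all_boot all_order all_algebra.
From mathcomp Require Import all_classical all_reals.
From mathcomp Require Import ereal topology normedtype sequences esum exp trigo.
From mathcomp Require Import zify ring lra.
Import Order.TTheory GRing.Theory Num.Theory.
Local Open Scope classical_set_scope.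
Local Open Scope ring_scope.
Set Implicit Arguments. Unset Strict Implicit. Unset Printing Implicit Defensive.

(* Since B = QR with Q orthogonal and R upper triangular, |Bx - c|^2 = sum_i r_ii^2 (x_i - mu_i)^2,
   so the Klein probability is Q(x) = rho_{s,c}(Bx) / prod_i rho_{s_i,mu_i}(Z).  The Jacobi theta function
   mu |-> rho_{s,mu}(Z) is maximal at mu = 0, hence Q(x) >= rho_{s,c}(Bx) / prod_i rho_{s_i}(Z)
   pointwise; summing over the finite set X_R gives Q(X_R) >= Delta_R, and both claims follow.

   The maximality of theta is proved without Poisson summation.  Writing th_a(c) = sum_k exp(-a (k + c)^2),
   splitting pairs (k, l) by the parity of k + l gives the duplication formula
     th_a(c) th_a(d) = th_2a((c+d)/2) th_2a((c-d)/2) + th_2a((c+d+1)/2) th_2a((c-d+1)/2),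
   whence th_a(c)^4 <= th_a(2c) th_a(0)^3 by Cauchy-Schwarz.  With the crude bound
   th_a(c) <= 2 th_a(0), induction gives th_a(c) <= (1 + 4^-n) th_a(0) for all n. *)

Section esum_complements.
Variable R : realType.
Local Open Scope ereal_scope.

Lemma esumZl (T : choiceType) (S : set T) (f : T -> \bar R) (r : R) :
  (0 <= r)%R -> (forall x, S x -> 0 <= f x) ->
  \esum_(i in S) (r%:E * f i) = r%:E * \esum_(i in S) f i.
Proof.
move=> r0 f0; rewrite /esum -ereal_supZl//; last first.
  by apply/set0P; exists 0; exists set0; [exact: fsets_set0|rewrite fsbig_set0].
congr ereal_sup; apply/seteqP; split=> x /=.
  move=> [A [finA AS] <-]; exists (\sum_(i \in A) f i); first by exists A.
  rewrite !fsbig_finite// big_seq [in RHS]big_seq ge0_sume_distrr// => i.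
  by rewrite in_fset_set// inE => /AS /f0.
move=> [y [A [finA AS] <-] <-]; exists A => //.
rewrite !fsbig_finite// big_seq [in RHS]big_seq ge0_sume_distrr// => i.
by rewrite in_fset_set// inE => /AS /f0.
Qed.

Lemma ge0_esumM (T1 T2 : choiceType) (f : T1 -> R) (g : T2 -> R) :
  (forall x, 0 <= f x)%R -> (forall y, 0 <= g y)%R ->
  \esum_(y in [set: T2]) (g y)%:E \is a fin_num ->
  (\esum_(x in [set: T1]) (f x)%:E) * (\esum_(y in [set: T2]) (g y)%:E) =
  \esum_(p in [set: T1 * T2]) (f p.1 * g p.2)%:E.
Proof.
move=> f0 g0 gfin.
have -> : [set: T1 * T2] = [set: T1] `*`` (fun=> [set: T2]) by apply/seteqP.
rewrite -(@esum_esum _ _ _ _ _ (fun x y => (f x * g y)%:E)); last first.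
  by move=> x y _ _; rewrite lee_fin mulr_ge0.
have g0E y : [set: T2] y -> 0 <= (g y)%:E by rewrite lee_fin.
rewrite -(fineK gfin) muleC -esumZl ?fine_ge0 ?esum_ge0//; last first.
  by move=> x _; rewrite lee_fin.
by apply: eq_esum => x _; rewrite muleC fineK// -esumZl.
Qed.

Lemma esum_int_split (f : int -> \bar R) : (forall k, 0 <= f k) ->
  \esum_(k in [set: int]) f k =
  \esum_(m in [set: nat]) f (Posz m) + \esum_(m in [set: nat]) f (Negz m).
Proof.
move=> f0; rewrite (esumID (range Posz)) // setTI.
rewrite (esum_image [set: nat] Posz f); last by move=> x y _ _ [].
have -> : [set: int] `&` ~` range Posz = range Negz.
  apply/seteqP; split => x /=.
    by case: x => m [_ /=]; [case; exists m|exists m].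
  by move=> [m _ <-]; split => // -[k _].
by rewrite (esum_image [set: nat] Negz f) //; move=> x y _ _ [].
Qed.

Lemma nneseries_geometric_le (q : R) : (0 < q)%R -> (q < 1)%R ->
  \sum_(0 <= i <oo) (q ^+ i)%:E <= ((1 - q)^-1)%:E.
Proof.
move=> q0 q1.
have : forall n, (0 <= n)%N -> xpredT n -> 0 <= (q ^+ n)%:E.
  by move=> m _ _; rewrite lee_fin exprn_ge0// ltW.
move/ereal_nondecreasing_series/ereal_nondecreasing_cvgn/cvg_lim => -> //.
apply: ge_ereal_sup => _ [k _ <-] /=; rewrite sumEFin lee_fin.
have := @geometric_le_lim R k 1 q ler01 q0; rewrite gtr0_norm// mul1r.
by rewrite -exprn_geometric; apply.
Qed.

Lemma esum_finite_fin_num (T : choiceType) (A : set T) (f : T -> R) :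
  finite_set A -> (forall x, A x -> (0 <= f x)%R) -> \esum_(x in A) (f x)%:E \is a fin_num.
Proof. by move=> fA f0; rewrite esum_fset ?fsumEFin// => x /[!inE] Ax; rewrite lee_fin f0. Qed.

End esum_complements.

Definition sum_diff (e : int) (p : int * int) : int * int :=
  (p.1 + p.2 + e, p.1 - p.2).

Lemma sum_diff_inj e : injective (sum_diff e).
Proof. by move=> [m m'] [l l'] [h1 h2]; congr pair; lia. Qed.

(* [(k, l)] lies in [range (sum_diff e)] exactly when [e] is the parity of [k + l] *)
Lemma setC_range_sum_diff0 : ~` range (sum_diff 0) = range (sum_diff 1).
Proof.
apply/seteqP; split => [[k l] /= k_l|_ [[m m'] _ <-] [[l l'] _ /=]]; last by case; lia.
set m := ((k + l) %/ 2)%Z.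
have [r0|r1] : ((k + l) %% 2 = 0 \/ (k + l) %% 2 = 1)%Z by lia.
  by exfalso; apply: k_l; exists (m, k - m) => //; rewrite /sum_diff/=; congr pair; lia.
by exists (m, k - m - 1) => //; rewrite /sum_diff/=; congr pair; lia.
Qed.

Section theta.
Variable R : realType.
Implicit Types (a b c d x y : R).

Definition gauss a x : R := expR (- a * x ^+ 2).

Definition etheta a c : \bar R := \esum_(k in [set: int]) (gauss a (k%:~R + c))%:E.

Definition theta a c : R := fine (etheta a c).

Lemma gauss_gt0 a x : 0 < gauss a x. Proof. exact: expR_gt0. Qed.

Lemma gauss_ge0 a x : 0 <= gauss a x. Proof. exact: expR_ge0. Qed.

Lemma gauss_le a x y : 0 < a -> y ^+ 2 <= x ^+ 2 -> gauss a x <= gauss a y.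
Proof. by move=> a0 xy; rewrite ler_expR !mulNr lerN2 ler_pM2l. Qed.

Lemma gauss_int_le a (k : int) : 0 < a -> gauss a k%:~R <= expR (- a) ^+ `|k|.
Proof.
move=> a0; rewrite -expRM_natr ler_expR !mulNr lerN2 ler_pM2l//.
rewrite -[k%:~R ^+ 2]intr_normK ?intr_int// -intr_norm -natr_absz -natrX ler_nat.
by case: `|k|%N => // m; rewrite expnS leq_pmulr.
Qed.

Lemma gaussM_sum_diff a c d (m m' e : int) :
  gauss a ((m + m' + e)%:~R + c) * gauss a ((m - m')%:~R + d) =
  gauss (2 * a) (m%:~R + (c + d + e%:~R) / 2) *
  gauss (2 * a) (m'%:~R + (c - d + e%:~R) / 2).
Proof. by rewrite -!expRD; congr expR; rewrite !intrD !intrN; field. Qed.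

Lemma etheta_ge0 a c : (0 <= etheta a c)%E.
Proof. by apply: esum_ge0 => k _; rewrite lee_fin gauss_ge0. Qed.

Lemma etheta_gt0 a c : (0 < etheta a c)%E.
Proof.
apply: (@lt_le_trans _ _ (gauss a (0%:~R + c))%:E); first by rewrite lte_fin gauss_gt0.
by apply: esum_ge; exists [set 0]; rewrite ?fsbig_set1.
Qed.

Lemma etheta_shift a c (j : int) : etheta a (c + j%:~R) = etheta a c.
Proof.
rewrite [RHS](reindex_esum [set: int] [set: int] (fun k : int => k + j)
  (fun k => (gauss a (k%:~R + c))%:E)); last first.
  split=> //; first by move=> x y _ _ /addIr.
  by move=> y _; exists (y - j) => //; rewrite subrK.
by apply: eq_esum => k _; rewrite intrD -addrA [_ + c]addrC.
Qed.

Lemma etheta0_lt_pinfty a : 0 < a -> (etheta a 0 < +oo)%E.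
Proof.
move=> a0; set q := expR (- a).
have q0 : 0 < q by exact: expR_gt0.
have q1 : q < 1 by rewrite expR_lt1 oppr_lt0.
have qn0 k : (0 <= (q ^+ k)%:E)%E by rewrite lee_fin exprn_ge0// ltW.
apply: (@le_lt_trans _ _ (\esum_(k in [set: int]) (q ^+ `|k|)%:E)%E).
  by apply: le_esum => k _; rewrite lee_fin addr0 gauss_int_le.
rewrite esum_int_split// -!nneseries_esumT//.
apply: (@le_lt_trans _ _ ((1 - q)^-1%:E + (1 - q)^-1%:E)%E); last by rewrite ltry.
apply: leeD; first exact: nneseries_geometric_le.
apply: le_trans (nneseries_geometric_le q0 q1).
by apply: lee_nneseries => // m _; rewrite lee_fin exprS ler_piMl// ?exprn_ge0// ltW.
Qed.

Lemma etheta_le_2etheta0 a c : 0 < a -> (etheta a c <= etheta a 0 + etheta a 0)%E.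
Proof.
move=> a0; set j := Num.floor c; set t := c - j%:~R.
have t0 : 0 <= t by rewrite subr_ge0 real_floor_le// num_real.
have t1 : t < 1.
  by rewrite ltrBlDr addrC -[1]/(1%:~R) -intrD real_floorD1_gt// num_real.
rewrite -(subrK j%:~R c) -/t etheta_shift -{2}(etheta_shift a 0 1) -esumD; last 2 first.
- by move=> k _; rewrite lee_fin gauss_ge0.
- by move=> k _; rewrite lee_fin gauss_ge0.
apply: le_esum => k _; rewrite -EFinD lee_fin add0r addr0.
(* as [0 <= t < 1], [k + t] is farther from 0 than [k] if [k >= 0], and than [k + 1] if [k < 0] *)
have [k0|k0] := lerP 0 k.
  have K0 : 0 <= k%:~R :> R by rewrite ler0z.
  by rewrite ler_wpDr ?gauss_ge0// gauss_le//; nra.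
have K0 : k%:~R <= -1 :> R by rewrite -[-1 : R]/((-1)%:~R) ler_int; lia.
by rewrite ler_wpDl ?gauss_ge0// gauss_le//; nra.
Qed.

Lemma etheta_fin_num a c : 0 < a -> etheta a c \is a fin_num.
Proof.
move=> a0; rewrite ge0_fin_numE ?etheta_ge0//.
by apply: le_lt_trans (etheta_le_2etheta0 c a0) _; rewrite lte_add_pinfty// etheta0_lt_pinfty.
Qed.

Lemma etheta_mul a b c d : 0 < b ->
  (etheta a c * etheta b d =
  \esum_(p in [set: int * int]) (gauss a (p.1%:~R + c) * gauss b (p.2%:~R + d))%:E)%E.
Proof.
move=> b0; apply: ge0_esumM; last exact: etheta_fin_num.
- by move=> k; exact: gauss_ge0.
- by move=> l; exact: gauss_ge0.
Qed.

Lemma esum_range_sum_diff a c d (e : int) : 0 < a ->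
  \esum_(p in range (sum_diff e)) (gauss a (p.1%:~R + c) * gauss a (p.2%:~R + d))%:E =
  (etheta (2 * a) ((c + d + e%:~R) / 2) * etheta (2 * a) ((c - d + e%:~R) / 2))%E.
Proof.
move=> a0; rewrite etheta_mul ?mulr_gt0// esum_image; last by move=> p q _ _ /sum_diff_inj.
by apply: eq_esum => -[m m'] _; rewrite /= gaussM_sum_diff.
Qed.

Lemma etheta_duplication a c d : 0 < a ->
  (etheta a c * etheta a d =
  etheta (2 * a) ((c + d) / 2) * etheta (2 * a) ((c - d) / 2) +
  etheta (2 * a) ((c + d + 1) / 2) * etheta (2 * a) ((c - d + 1) / 2))%E.
Proof.
move=> a0; rewrite etheta_mul// (esumID (range (sum_diff 0))); last first.
  by move=> p _; rewrite lee_fin mulr_ge0 ?gauss_ge0.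
by rewrite !setTI setC_range_sum_diff0 !esum_range_sum_diff// !addr0.
Qed.

Lemma thetaE a c : 0 < a -> etheta a c = (theta a c)%:E.
Proof. by move=> a0; rewrite fineK// etheta_fin_num. Qed.

Lemma theta_gt0 a c : 0 < a -> 0 < theta a c.
Proof. by move=> a0; rewrite -lte_fin -thetaE// etheta_gt0. Qed.

Lemma theta_duplication a c d : 0 < a ->
  theta a c * theta a d =
  theta (2 * a) ((c + d) / 2) * theta (2 * a) ((c - d) / 2) +
  theta (2 * a) ((c + d + 1) / 2) * theta (2 * a) ((c - d + 1) / 2).
Proof.
move=> a0; have a2 : 0 < 2 * a by rewrite mulr_gt0.
by apply: EFin_inj; rewrite EFinD !EFinM -!thetaE// etheta_duplication.
Qed.

Lemma theta_le_2theta0 a c : 0 < a -> theta a c <= 2 * theta a 0.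
Proof. by move=> a0; rewrite -lee_fin mulr_natl mulr2n EFinD -!thetaE// etheta_le_2etheta0. Qed.

Lemma theta_expr4_le a c : 0 < a ->
  theta a c ^+ 4 <= theta a (c + c) * theta a 0 ^+ 3.
Proof.
move=> a0; have dup := theta_duplication _ _ a0.
have := dup c c; have := dup (c + c) 0; have := dup 0 0.
rewrite !subrr !addr0 !subr0.
set x := theta _ ((c + c) / 2); set y := theta _ (0 / 2).
set z := theta _ ((c + c + 1) / 2); set w := theta _ ((0 + 1) / 2).
move=> t00 t2c0 tcc.
rewrite -subr_ge0 (_ : _ ^+ 4 = (theta a c * theta a c) ^+ 2); last by ring.
rewrite (_ : _ * _ ^+ 3 = theta a (c + c) * theta a 0 * (theta a 0 * theta a 0)); last by ring.
(* Lagrange's identity, i.e. the Cauchy-Schwarz inequality in the plane *)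
rewrite t00 t2c0 tcc (_ : _ - _ = (x * w - z * y) ^+ 2); last by ring.
exact: sqr_ge0.
Qed.

Lemma expr4_le_1Dquarter (u t e : R) : 0 <= u -> 0 < t -> 0 <= e ->
  u ^+ 4 <= t ^+ 4 * (1 + e) -> u <= t * (1 + e / 4).
Proof.
move=> u0 t0 e0 ut; rewrite leNgt; apply/negP => tu.
have bernoulli : 1 + e <= (1 + e / 4) ^+ 4.
  rewrite -subr_ge0 (_ : _ - _ = (e / 4) ^+ 2 * (6 + e + (e / 4) ^+ 2)); last by field.
  by rewrite mulr_ge0 ?sqr_ge0// !addr_ge0 ?sqr_ge0.
have : (t * (1 + e / 4)) ^+ 4 < u ^+ 4.
  by rewrite ltrXn2r// mulr_ge0 ?(ltW t0) ?addr_ge0 ?divr_ge0.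
by rewrite exprMn => /lt_le_trans/(_ ut); rewrite ltNge ler_wpM2l ?exprn_ge0 ?(ltW t0).
Qed.

Lemma theta_le_iter a n c : 0 < a -> theta a c <= theta a 0 * (1 + (4 ^ n)%:R^-1).
Proof.
move=> a0; elim: n c => [|n IHn] c; first by rewrite expn0 invr1 mulrC -[1 + 1]/2 theta_le_2theta0.
have -> : (4 ^ n.+1)%:R^-1 = (4 ^ n)%:R^-1 / 4 :> R by rewrite expnS natrM invfM mulrC.
apply: expr4_le_1Dquarter; [exact/ltW/theta_gt0 | exact: theta_gt0 | by rewrite invr_ge0 |].
apply: le_trans (theta_expr4_le c a0) _.
by rewrite (exprSr _ 3) -mulrA [leLHS]mulrC ler_pM2l ?exprn_gt0 ?theta_gt0// IHn.
Qed.

Lemma theta_le_theta0 a c : 0 < a -> theta a c <= theta a 0.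
Proof.
move=> a0; apply/ler_addgt0Pr => e e0.
set n := Num.truncn (theta a 0 / e).
apply: le_trans (theta_le_iter n c a0) _; rewrite mulrDr mulr1 lerD2l.
have n_lt : theta a 0 / e < n.+1%:R by exact: truncnS_gt.
have n4 : n.+1%:R <= (4 ^ n)%:R :> R.
  by rewrite ler_nat; elim: (n) => // k IHk; rewrite expnS; lia.
rewrite ler_pdivrMr ?ltr0n ?expn_gt0// mulrC; rewrite ltr_pdivrMr// in n_lt.
by apply: le_trans (ltW n_lt) _; rewrite ler_pM2r.
Qed.

End theta.

Lemma finite_bounded_intmx (m n N : nat) :
  finite_set [set x : 'M[int]_(m, n) | forall i j, (`|x i j| <= N)%N].
Proof.
apply: (@sub_finite_set _ _ [set map_mx (fun k : 'I_(N.*2.+1) => k%:Z - N%:Z) v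
   | v in [set: 'M['I_(N.*2.+1)]_(m, n)]]); last exact: finite_image finite_finset.
move=> x xN; exists (\matrix_(i, j) inord (absz (x i j + N%:Z))) => //.
apply/matrixP => i j; rewrite !mxE; move: (x i j) (xN i j) => z zN.
have z0 : 0 <= z + N by lia.
by rewrite inordK -?ltz_nat gez0_abs//; lia.
Qed.

Section vnorm.
Variable R : realType.

Lemma sum_sqr_mxE (n : nat) (v : 'cV[R]_n) : \sum_i v i 0 ^+ 2 = (v^T *m v) 0 0.
Proof. by rewrite mxE; apply: eq_bigr => i _; rewrite mxE expr2. Qed.

Lemma orthomx_sum_sqr (n : nat) (Q : 'M[R]_n) (w : 'cV[R]_n) :
  Q^T *m Q = 1%:M -> \sum_i (Q *m w) i 0 ^+ 2 = \sum_i w i 0 ^+ 2.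
Proof.
by move=> QQ; rewrite !sum_sqr_mxE trmx_mul -mulmxA (mulmxA Q^T) QQ mul1mx.
Qed.

Lemma vnorm_coord_le (n : nat) (v : 'cV[R]_n) j : `|v j 0| <= vnorm v.
Proof.
rewrite /vnorm -sqrtr_sqr ler_sqrt; last by apply: sumr_ge0 => i _; exact: sqr_ge0.
by rewrite (bigD1 j) //= lerDl; apply: sumr_ge0 => i _; exact: sqr_ge0.
Qed.

End vnorm.

Section rhoZ.
Variable R : realType.

Lemma rhoZ_theta (s mu : R) : rhoZ s mu = theta (pi / s ^+ 2) (- mu).
Proof.
rewrite /rhoZ /theta /etheta; congr fine; apply: eq_esum => k _.
by rewrite /rho1 /gauss; congr (expR _)%:E; ring.
Qed.

Lemma rhoZ_gt0 (s mu : R) : 0 < s -> 0 < rhoZ s mu.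
Proof. by move=> s0; rewrite rhoZ_theta theta_gt0// divr_gt0 ?pi_gt0 ?exprn_gt0. Qed.

Lemma rhoZ_le_rhoZ0 (s mu : R) : 0 < s -> rhoZ s mu <= rhoZ s 0.
Proof.
by move=> s0; rewrite !rhoZ_theta oppr0 theta_le_theta0// divr_gt0 ?pi_gt0 ?exprn_gt0.
Qed.

End rhoZ.

Section klein.
Variables (R : realType) (n : nat) (B Qm Rm : 'M[R]_n) (s : R) (c : 'cV[R]_n).
Hypotheses (B_unit : B \in unitmx) (Qm_orth : Qm^T *m Qm = 1%:M).
Hypotheses (Rm_trig : forall i j : 'I_n, (j < i)%N -> Rm i j = 0) (B_QR : B = Qm *m Rm).
Hypothesis s_gt0 : 0 < s.

Lemma QR_diag_neq0 i : Rm i i != 0.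
Proof.
apply/negP => /eqP Rii0; move: B_unit.
rewrite unitmxE B_QR det_mulmx -(det_tr Rm) (det_trig (A := Rm^T)).
  by rewrite (bigD1 i)//= mxE Rii0 mul0r mulr0 unitr0.
by apply/is_trig_mxP => j k jk; rewrite mxE Rm_trig.
Qed.

Lemma s_i_gt0 i : 0 < s_i s Rm i.
Proof. by rewrite divr_gt0// normr_gt0 QR_diag_neq0. Qed.

Lemma prod_rhoZ_gt0 (mu : 'I_n -> R) : 0 < \prod_i rhoZ (s_i s Rm i) (mu i).
Proof. by apply: prodr_gt0 => i _; rewrite rhoZ_gt0 ?s_i_gt0. Qed.

Lemma QR_residualE (x : 'cV[int]_n) i :
  (Rm *m intv R x - Qm^T *m c) i 0 = Rm i i * ((x i 0)%:~R - mu_i Qm Rm c x i).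
Proof.
have Rii := QR_diag_neq0 i.
rewrite !mxE /mu_i (bigD1 i) //= (bigID (fun j : 'I_n => (i < j)%N)) /=.
rewrite [X in _ + (_ + X)]big1 ?addr0; last first.
  by move=> j /andP[ji ij]; rewrite Rm_trig ?mul0r// ltn_neqAle val_eqE ji leqNgt.
rewrite (eq_bigl (fun j : 'I_n => (i < j)%N)); last first.
  by move=> j; apply/andb_idl => ij; rewrite -val_eqE gtn_eqF.
under eq_bigr do rewrite mxE.
by rewrite !mxE; field.
Qed.

Lemma rhov_QR_prod (x : 'cV[int]_n) :
  rhov s c (B *m intv R x) = \prod_i rho1 (s_i s Rm i) (mu_i Qm Rm c x i) (x i 0)%:~R.
Proof.
have BxcE : B *m intv R x - c = Qm *m (Rm *m intv R x - Qm^T *m c).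
  by rewrite mulmxBr !mulmxA (mulmx1C Qm_orth) mul1mx B_QR.
rewrite /rhov BxcE /vnorm sqr_sqrtr; last by apply: sumr_ge0 => i _; exact: sqr_ge0.
rewrite orthomx_sum_sqr // mulr_sumr mulr_suml expR_sum; apply: eq_bigr => i _.
have Rii := QR_diag_neq0 i.
rewrite QR_residualE /rho1 /s_i exprMn expr_div_n real_normK ?num_real//.
by congr expR; field; rewrite Rii gt_eqF.
Qed.

Lemma kleinQ_ge (x : 'cV[int]_n) :
  rhov s c (B *m intv R x) / \prod_i rhoZ (s_i s Rm i) 0 <= kleinQ s Qm Rm c x.
Proof.
rewrite /kleinQ prodf_div -rhov_QR_prod ler_wpM2l ?expR_ge0//.
rewrite lef_pV2 ?posrE ?prod_rhoZ_gt0//.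
by apply: ler_prod => i _; rewrite ltW ?rhoZ_gt0 ?rhoZ_le_rhoZ0 ?s_i_gt0.
Qed.

Variable Rad : R.

Lemma ballX_coord_le (x : 'cV[int]_n) k : ballX B c Rad x ->
  `|(B *m intv R x) k 0| <= Rad + \sum_j `|c j 0|.
Proof.
move=> xX; rewrite -[X in `|X|](subrK (c k 0)); apply: le_trans (ler_normD _ _) _.
apply: lerD; last by rewrite (bigD1 k)//= lerDl sumr_ge0.
by apply: le_trans xX; have := vnorm_coord_le (B *m intv R x - c) k; rewrite !mxE.
Qed.

Lemma ballX_finite : finite_set (ballX B c Rad).
Proof.
pose C : R := Rad + \sum_j `|c j 0|; pose M : R := \sum_i \sum_j `|invmx B i j|.
apply: sub_finite_set (finite_bounded_intmx n 1 (Num.truncn (M * C))).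
move=> x xX i j; rewrite (ord1 j) -ltnS -(ltr_nat R).
apply: le_lt_trans (truncnS_gt (M * C)).
have -> : `|x i 0|%:R = `|intv R x i 0| by rewrite mxE -intr_norm natr_absz.
rewrite -(mulKmx B_unit (intv R x)) mxE.
apply: le_trans (ler_norm_sum _ _ _) _.
apply: le_trans (_ : _ <= \sum_k `|invmx B i k| * C) _.
  by apply: ler_sum => k _; rewrite normrM ler_wpM2l// ballX_coord_le.
have C0 : 0 <= C by rewrite addr_ge0 ?sumr_ge0// (le_trans _ xX) ?sqrtr_ge0.
rewrite -mulr_suml ler_wpM2r// /M [leRHS](bigD1 i)//= lerDl.
by do 2!apply: sumr_ge0 => ? _.
Qed.

Lemma DeltaR_le_QX : DeltaR s B Rm c Rad <= QX s B Qm Rm c Rad.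
Proof.
have P0 := prod_rhoZ_gt0 (fun=> 0).
have rho0 x : 0 <= rhov s c (B *m intv R x) by exact: expR_ge0.
have kleinQ0 x : 0 <= kleinQ s Qm Rm c x.
  by apply: le_trans (kleinQ_ge x); rewrite divr_ge0 ?(ltW P0).
have rho_fin := esum_finite_fin_num ballX_finite (fun x _ => rho0 x).
have kleinQ_fin := esum_finite_fin_num ballX_finite (fun x _ => kleinQ0 x).
rewrite -lee_fin /DeltaR /rhoX /QX EFinM !fineK//.
rewrite muleC -esumZl ?invr_ge0 ?(ltW P0)//; last by move=> x _; rewrite lee_fin.
by apply: le_esum => x _; rewrite -EFinM lee_fin mulrC kleinQ_ge.
Qed.

Lemma rhoX_gt0 : ballX B c Rad !=set0 -> 0 < rhoX s B c Rad.
Proof.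
move=> [x0 x0X]; rewrite fine_gt0//.
have /fin_numPlt/andP[_ ->] :
    \esum_(x in ballX B c Rad) (rhov s c (B *m intv R x))%:E \is a fin_num.
  by apply: esum_finite_fin_num ballX_finite _ => x _; exact: expR_ge0.
rewrite andbT.
apply: (@lt_le_trans _ _ (rhov s c (B *m intv R x0))%:E); first by rewrite lte_fin expR_gt0.
apply: esum_ge; exists [set x0]; last by rewrite fsbig_set1.
by split=> [|x ->//]; exact: finite_set1.
Qed.

End klein.

Theorem proposition1 (R : realType) (n : nat) (B Qm Rm : 'M[R]_n)
    (s : R) (c : 'cV[R]_n) (Rad : R) :
  B \in unitmx ->
  Qm^T *m Qm = 1%:M ->
  (forall i j : 'I_n, (j < i)%N -> Rm i j = 0) ->
  B = Qm *m Rm ->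
  0 < s -> 0 < Rad ->
  ballX B c Rad !=set0 ->
  (0 < pR s B Qm Rm c Rad /\ pR s B Qm Rm c Rad <= 1) /\
  (forall x : 'cV[int]_n,
      pR s B Qm Rm c Rad * piR s B c Rad x <= QR s B Qm Rm c Rad x).
Proof.
move=> B_unit Qm_orth Rm_trig B_QR s_gt0 _ X_neq0.
have rhoX0 : 0 < rhoX s B c Rad by exact: rhoX_gt0.
have P0 := prod_rhoZ_gt0 B_unit Rm_trig B_QR s_gt0 (fun=> 0).
have DeltaR_le : DeltaR s B Rm c Rad <= QX s B Qm Rm c Rad by exact: DeltaR_le_QX.
have QX0 : 0 < QX s B Qm Rm c Rad by apply: lt_le_trans DeltaR_le; rewrite divr_gt0.
rewrite /pR; split; first by rewrite !divr_gt0// ler_pdivrMr// mul1r.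
move=> x; rewrite /piR /QR; case: ifP => _; last by rewrite mulr0.
rewrite mulrAC ler_pM2r ?invr_gt0// /DeltaR mulrC mulrA divfK ?gt_eqF//.
exact: kleinQ_ge.
Qed.
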